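(* $\mathrm{NID}\notin\Pi_1$; that is, there is no computable function $f:\{0,1\}^*\times\{0,1\}^*\times\omega\to\mathbb{Q}$ which is nonincreasing in $s$ and satisfies $\lim_{s\to\infty}f(x,y,s)=\mathrm{NID}(x,y)$ for all $x,y$.
   Context: Fix a universal prefix-free machine $U$. $K(x)$ denotes prefix-free Kolmogorov complexity and $K(x\mid y)$ conditional prefix-free complexity. For binary strings $x,y$ let $E(x,y)=\max\{K(x\mid y),K(y\mid x)\}$ and $\mathrm{NID}(x,y)=\dfrac{E(x,y)}{\max\{K(x),K(y)\}}$ (a rational number). A function $F$ (on pairs of strings, rational-valued) is in $\Pi_1$ if it has a computable approximation $f$ with $\lim_s f(\cdot,s)=F$ that is nonincreasing in $s$. *)

From Stdlib Require Import List Arith QArith Qabs Cantor.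
Local Open Scope nat_scope.
Import ListNotations.

Inductive code : Type :=
| CZero
| CSucc
| CProj (i : nat)
| CComp (f : code) (gs : list code)
| CPrim (f g : code)
| CMu (f : code).

(* Step-indexed evaluation (monotone in fuel).  Missing arguments read as 0. *)
Fixpoint eval (fuel : nat) (c : code) (args : list nat) {struct fuel} : option nat :=
  match fuel with
  | 0 => None
  | S n =>
    match c with
    | CZero => Some 0
    | CSucc => Some (S (hd 0 args))
    | CProj i => Some (nth i args 0)
    | CComp f gs =>
        match (fix evl (l : list code) : option (list nat) :=
                 match l with
                 | nil => Some nil
                 | g :: l' =>
                     match eval n g args, evl l' with
                     | Some v, Some vs => Some (v :: vs)
                     | _, _ => None
                     end
                 end) gs with
        | Some vs => eval n f vs
        | None => None
        end
    | CPrim f g =>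
        let rest := tl args in
        match hd 0 args with
        | 0 => eval n f rest
        | S x => match eval n (CPrim f g) (x :: rest) with
                 | Some r => eval n g (x :: r :: rest)
                 | None => None
                 end
        end
    | CMu f =>
        (fix search (k y : nat) : option nat :=
           match k with
           | 0 => None
           | S k' => match eval n f (y :: args) with
                     | Some 0 => Some y
                     | Some _ => search k' (S y)
                     | None => None
                     end
           end) n 0
    end
  end.

Definition halts (c : code) (args : list nat) (v : nat) : Prop :=
  exists fuel, eval fuel c args = Some v.

Definition bstr := list bool.

Fixpoint enc (s : bstr) : nat :=
  match s with
  | nil => 0
  | b :: s' => S (2 * enc s' + (if b then 1 else 0))
  end.

Definition runs (c : code) (p y x : bstr) : Prop := halts c [enc p; enc y] (enc x).

Definition in_dom (c : code) (p y : bstr) : Prop := exists x, runs c p y x.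

Definition prefix_free_machine (c : code) : Prop :=
  forall y p q, in_dom c p y -> in_dom c (p ++ q) y -> q = nil.

Definition universal_pf (u : code) : Prop :=
  prefix_free_machine u /\
  forall m : code, prefix_free_machine m ->
    exists sigma : bstr, forall p y x, runs u (sigma ++ p) y x <-> runs m p y x.

Definition Kc (u : code) (x y : bstr) (k : nat) : Prop :=
  (exists p, runs u p y x /\ length p = k) /\
  (forall p, runs u p y x -> k <= length p).

Definition Ku (u : code) (x : bstr) (k : nat) : Prop := Kc u x nil k.

Local Open Scope Q_scope.
Definition NID_is (u : code) (x y : bstr) (q : Q) : Prop :=
  exists kxy kyx kx ky,
    Kc u x y kxy /\ Kc u y x kyx /\ Ku u x kx /\ Ku u y ky /\
    q == inject_Z (Z.of_nat (Nat.max kxy kyx)) / inject_Z (Z.of_nat (Nat.max kx ky)).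

(* Output n codes the rational (a - b)/(c+1) where (a,(b,c)) = Cantor decoding of n. *)
Definition decodeQ (n : nat) : Q :=
  let (a, r) := Cantor.of_nat n in
  let (b, c) := Cantor.of_nat r in
  (inject_Z (Z.of_nat a) - inject_Z (Z.of_nat b)) / inject_Z (Z.of_nat (S c)).

Definition computable3 (f : bstr -> bstr -> nat -> Q) : Prop :=
  exists e : code, forall x y s,
    exists n, halts e [enc x; enc y; s] n /\ decodeQ n == f x y s.

Definition Q_limit (a : nat -> Q) (l : Q) : Prop :=
  forall eps : Q, 0 < eps -> exists s0, forall s, (s0 <= s)%nat -> Qabs.Qabs (a s - l) < eps.

(* Suppose f approximates NID from above. Copying gives K(x | x) = O(1), so NID(x, x) is
   O(1 / K(x)) and, by counting, below any 1 / v for some x; hence some f(x, x, s) < 1 / v.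
   A prefix-free machine reading the program 1^n 0, of code v, can search for the first such
   pair (x, s) and print x, so K(x) <= |sigma| + n + 1 <= v once n is chosen larger than the
   prefix sigma by which U simulates that machine. But then
   f(x, x, s) >= NID(x, x) >= 1 / K(x) >= 1 / v, a contradiction. *)
From Stdlib Require Import List Arith QArith.
From Stdlib Require Import ZArith Lia Lqa Qabs Cantor Classical ClassicalEpsilon FinFun.
Import ListNotations.
Open Scope nat_scope.

Fixpoint eval_list (n : nat) (gs : list code) (args : list nat) : option (list nat) :=
  match gs with
  | nil => Some nil
  | g :: gs' => match eval n g args, eval_list n gs' args with
                | Some v, Some vs => Some (v :: vs)
                | _, _ => None
                end
  end.

Fixpoint mu_search (n : nat) (f : code) (args : list nat) (k y : nat) : option nat :=
  match k with
  | 0 => None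
  | S k' => match eval n f (y :: args) with
            | Some 0 => Some y
            | Some _ => mu_search n f args k' (S y)
            | None => None
            end
  end.

Lemma eval_S_comp n f gs args :
  eval (S n) (CComp f gs) args =
  match eval_list n gs args with Some vs => eval n f vs | None => None end.
Proof.
  cbn. match goal with |- match ?F gs with _ => _ end = _ => set (G := F) end.
  assert (HG : forall l, G l = eval_list n l args)
    by (induction l as [|g l IH]; cbn; [|rewrite IH]; reflexivity).
  now rewrite HG.
Qed.

Lemma eval_S_mu n f args : eval (S n) (CMu f) args = mu_search n f args n 0.
Proof.
  cbn. match goal with |- ?F n 0 = _ => set (G := F) end.
  assert (HG : forall k y, G k y = mu_search n f args k y).
  { induction k as [|k IH]; intros y; cbn; [reflexivity|].
    destruct (eval n f (y :: args)) as [[|]|]; auto. }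
  apply HG.
Qed.

Section EvalMonotone.
Variables n m : nat.
Hypothesis eval_n_m : forall c args v, eval n c args = Some v -> eval m c args = Some v.

Lemma eval_list_lift gs args vs :
  eval_list n gs args = Some vs -> eval_list m gs args = Some vs.
Proof.
  revert vs; induction gs as [|g gs IH]; intros vs H; cbn in *; [exact H|].
  destruct (eval n g args) eqn:Eg; [|discriminate].
  destruct (eval_list n gs args) eqn:Egs; [|discriminate].
  now rewrite (eval_n_m _ _ _ Eg), (IH _ eq_refl).
Qed.

Lemma mu_search_lift f args k k' y r : k <= k' ->
  mu_search n f args k y = Some r -> mu_search m f args k' y = Some r.
Proof.
  revert k' y; induction k as [|k IH]; intros k' y Hk H; [discriminate|].
  destruct k' as [|k']; [lia|]. cbn in *.
  destruct (eval n f (y :: args)) as [w|] eqn:E; [|discriminate].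
  rewrite (eval_n_m _ _ _ E). destruct w; [exact H|]. apply IH; [lia|exact H].
Qed.

End EvalMonotone.

Lemma eval_monotone n m c args v : n <= m -> eval n c args = Some v -> eval m c args = Some v.
Proof.
  revert m c args v; induction n as [|n IH]; intros m c args v Hnm H; [discriminate|].
  destruct m as [|m]; [lia|].
  assert (Hlift : forall c args v, eval n c args = Some v -> eval m c args = Some v)
    by (intros; apply (IH m); [lia|assumption]).
  destruct c as [| |i|f gs|f g|f].
  - exact H.
  - exact H.
  - exact H.
  - rewrite eval_S_comp in *.
    destruct (eval_list n gs args) eqn:E; [|discriminate].
    now rewrite (eval_list_lift _ _ Hlift _ _ _ E), (Hlift _ _ _ H).
  - cbn in *. destruct (hd 0 args) as [|x]; [now apply Hlift|].
    destruct (eval n (CPrim f g) (x :: tl args)) eqn:E; [|discriminate].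
    now rewrite (Hlift _ _ _ E), (Hlift _ _ _ H).
  - rewrite eval_S_mu in *. apply (mu_search_lift _ _ Hlift _ _ n); [lia|exact H].
Qed.

Lemma halts_deterministic c args v w : halts c args v -> halts c args w -> v = w.
Proof.
  intros [n Hn] [m Hm].
  apply (eval_monotone _ (max n m)) in Hn; [|lia].
  apply (eval_monotone _ (max n m)) in Hm; [|lia].
  congruence.
Qed.

Lemma halts_eventually c args v :
  halts c args v -> exists N, forall m, N <= m -> eval m c args = Some v.
Proof. intros [n Hn]. exists n. intros m Hm. exact (eval_monotone _ _ _ _ _ Hm Hn). Qed.

Lemma halts_zero args : halts CZero args 0.
Proof. now exists 1. Qed.

Lemma halts_succ args : halts CSucc args (S (hd 0 args)).
Proof. now exists 1. Qed.

Lemma halts_proj i args : halts (CProj i) args (nth i args 0).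
Proof. now exists 1. Qed.

Lemma eval_list_halts gs args vs :
  Forall2 (fun g v => halts g args v) gs vs ->
  exists N, forall m, N <= m -> eval_list m gs args = Some vs.
Proof.
  induction 1 as [|g v gs vs Hg _ [N HN]]; [now exists 0|].
  destruct (halts_eventually _ _ _ Hg) as [M HM].
  exists (max N M). intros m Hm. cbn. now rewrite HM, HN by lia.
Qed.

Lemma eval_list_sound n gs args vs :
  eval_list n gs args = Some vs -> Forall2 (fun g v => halts g args v) gs vs.
Proof.
  revert vs; induction gs as [|g gs IH]; intros vs H; cbn in H.
  - injection H as <-. constructor.
  - destruct (eval n g args) eqn:E; [|discriminate].
    destruct (eval_list n gs args); [|discriminate].
    injection H as <-. constructor; [now exists n|auto].
Qed.

Lemma halts_comp f gs args vs v :
  Forall2 (fun g v => halts g args v) gs vs -> halts f vs v -> halts (CComp f gs) args v.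
Proof.
  intros Hgs Hf.
  destruct (eval_list_halts _ _ _ Hgs) as [N HN]. destruct (halts_eventually _ _ _ Hf) as [M HM].
  exists (S (max N M)). rewrite eval_S_comp, HN by lia. apply HM; lia.
Qed.

Lemma halts_comp_inv f gs args v : halts (CComp f gs) args v ->
  exists vs, Forall2 (fun g v => halts g args v) gs vs /\ halts f vs v.
Proof.
  intros [[|n] Hn]; [discriminate|]. rewrite eval_S_comp in Hn.
  destruct (eval_list n gs args) as [vs|] eqn:E; [|discriminate].
  exists vs. split; [exact (eval_list_sound _ _ _ _ E)|now exists n].
Qed.

Lemma halts_comp1 f g args a v :
  halts g args a -> halts f [a] v -> halts (CComp f [g]) args v.
Proof. intros; eapply halts_comp; eauto. Qed.

Lemma halts_comp2 f g1 g2 args a b v :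
  halts g1 args a -> halts g2 args b -> halts f [a; b] v -> halts (CComp f [g1; g2]) args v.
Proof. intros; eapply halts_comp; eauto. Qed.

Lemma halts_comp3 f g1 g2 g3 args a b c v :
  halts g1 args a -> halts g2 args b -> halts g3 args c -> halts f [a; b; c] v ->
  halts (CComp f [g1; g2; g3]) args v.
Proof. intros; eapply halts_comp; eauto. Qed.

Lemma halts_comp1_inv f g args v :
  halts (CComp f [g]) args v -> exists a, halts g args a /\ halts f [a] v.
Proof.
  intros H. apply halts_comp_inv in H as [vs [Hgs Hf]].
  inversion Hgs as [|? a ? ? Ha Hnil]; subst. inversion Hnil; subst. eauto.
Qed.

Lemma halts_comp2_inv f g1 g2 args v : halts (CComp f [g1; g2]) args v ->
  exists a b, halts g1 args a /\ halts g2 args b /\ halts f [a; b] v.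
Proof.
  intros H. apply halts_comp_inv in H as [vs [Hgs Hf]].
  inversion Hgs as [|? a ? ? Ha H2]; subst. inversion H2 as [|? b ? ? Hb Hnil]; subst.
  inversion Hnil; subst. eauto 6.
Qed.

Lemma halts_prim_zero f g args v : halts f args v -> halts (CPrim f g) (0 :: args) v.
Proof. intros [n Hn]. now exists (S n). Qed.

Lemma halts_prim_succ f g x args w v :
  halts (CPrim f g) (x :: args) w -> halts g (x :: w :: args) v ->
  halts (CPrim f g) (S x :: args) v.
Proof.
  intros H1 H2.
  destruct (halts_eventually _ _ _ H1) as [N HN]. destruct (halts_eventually _ _ _ H2) as [M HM].
  exists (S (max N M)). cbn [eval hd tl]. rewrite HN by lia. apply HM; lia.
Qed.

Lemma mu_search_spec n f args y k i : i <= y -> y - i < k ->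
  eval n f (y :: args) = Some 0 ->
  (forall j, i <= j < y -> exists w, w <> 0 /\ eval n f (j :: args) = Some w) ->
  mu_search n f args k i = Some y.
Proof.
  revert i; induction k as [|k IH]; intros i Hi Hk Hy Hj; [lia|]. cbn.
  destruct (Nat.eq_dec i y) as [->|Hne]; [now rewrite Hy|].
  destruct (Hj i) as [[|w] [Hw Ew]]; [lia|lia|]. rewrite Ew.
  apply IH; auto; [lia|lia|]. intros; apply Hj; lia.
Qed.

Lemma mu_search_sound n f args k i y :
  mu_search n f args k i = Some y -> eval n f (y :: args) = Some 0.
Proof.
  revert i; induction k as [|k IH]; intros i H; cbn in H; [discriminate|].
  destruct (eval n f (i :: args)) as [[|w]|] eqn:E; [injection H as <-; exact E|eauto|discriminate].
Qed.

Lemma halts_mu f args y :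
  halts f (y :: args) 0 -> (forall j, j < y -> exists w, w <> 0 /\ halts f (j :: args) w) ->
  halts (CMu f) args y.
Proof.
  intros Hy Hbelow.
  assert (Hfuel : forall y', y' <= y -> exists N, forall m, N <= m ->
            forall j, j < y' -> exists w, w <> 0 /\ eval m f (j :: args) = Some w).
  { induction y' as [|y' IH]; intros Hy'; [exists 0; intros; lia|].
    destruct (Hbelow y') as [w [Hw Ew]]; [lia|].
    destruct (halts_eventually _ _ _ Ew) as [N1 HN1]. destruct IH as [N2 HN2]; [lia|].
    exists (max N1 N2). intros m Hm j Hj.
    destruct (Nat.eq_dec j y') as [->|]; [exists w; split; [exact Hw|apply HN1; lia]|].
    apply (HN2 m); lia. }
  destruct (Hfuel y (le_n _)) as [N HN]. destruct (halts_eventually _ _ _ Hy) as [M HM].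
  exists (S (max (max N M) (S y))). rewrite eval_S_mu.
  apply mu_search_spec; [lia|lia|apply HM; lia|].
  intros j Hj. apply (HN (max (max N M) (S y))); lia.
Qed.

Lemma halts_mu_inv f args y : halts (CMu f) args y -> halts f (y :: args) 0.
Proof.
  intros [[|n] Hn]; [discriminate|]. rewrite eval_S_mu in Hn.
  exists n. exact (mu_search_sound _ _ _ _ _ _ Hn).
Qed.

Lemma halts_mu_total f args y :
  (forall j, exists w, halts f (j :: args) w) -> halts f (y :: args) 0 ->
  exists y', halts (CMu f) args y'.
Proof.
  intros Htot. induction y as [y IH] using lt_wf_ind. intros Hy.
  destruct (classic (exists j, j < y /\ halts f (j :: args) 0)) as [[j [Hj Hj0]]|Hleast].
  - exact (IH j Hj Hj0).
  - exists y. apply halts_mu; [exact Hy|]. intros j Hj. destruct (Htot j) as [w Hw].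
    exists w. split; [|exact Hw]. intros ->. apply Hleast. eauto.
Qed.

Fixpoint const_code (k : nat) : code :=
  match k with 0 => CZero | S k => CComp CSucc [const_code k] end.

Lemma halts_const k args : halts (const_code k) args k.
Proof.
  induction k as [|k IH]; [apply halts_zero|].
  eapply halts_comp1; [exact IH|apply halts_succ].
Qed.

Definition add_code := CPrim (CProj 0) (CComp CSucc [CProj 1]).

Lemma halts_add x y args : halts add_code (x :: y :: args) (x + y).
Proof.
  induction x as [|x IH]; [apply halts_prim_zero, halts_proj|].
  eapply halts_prim_succ; [exact IH|]. eapply halts_comp1; [apply halts_proj|apply halts_succ].
Qed.

Definition mul_code := CPrim CZero (CComp add_code [CProj 1; CProj 2]).

Lemma halts_mul x y args : halts mul_code (x :: y :: args) (x * y).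
Proof.
  induction x as [|x IH]; [apply halts_prim_zero, halts_zero|].
  eapply halts_prim_succ; [exact IH|].
  eapply halts_comp2; [apply halts_proj|apply halts_proj|]. cbn.
  rewrite Nat.add_comm. apply halts_add.
Qed.

Definition pred_code := CPrim CZero (CProj 0).

Lemma halts_pred x args : halts pred_code (x :: args) (pred x).
Proof.
  induction x as [|x IH]; [apply halts_prim_zero, halts_zero|].
  eapply halts_prim_succ; [exact IH|apply halts_proj].
Qed.

Definition rsub_code := CPrim (CProj 0) (CComp pred_code [CProj 1]).

Lemma halts_rsub y x args : halts rsub_code (y :: x :: args) (x - y).
Proof.
  induction y as [|y IH]; [rewrite Nat.sub_0_r; apply halts_prim_zero, halts_proj|].
  eapply halts_prim_succ; [exact IH|]. eapply halts_comp1; [apply halts_proj|]. cbn.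
  replace (x - S y) with (pred (x - y)) by lia. apply halts_pred.
Qed.

Definition sub_code := CComp rsub_code [CProj 1; CProj 0].

Lemma halts_sub x y args : halts sub_code (x :: y :: args) (x - y).
Proof. eapply halts_comp2; [apply halts_proj|apply halts_proj|apply halts_rsub]. Qed.

Definition dist_code := CComp add_code [sub_code; CComp sub_code [CProj 1; CProj 0]].

Lemma halts_dist x y args : halts dist_code (x :: y :: args) ((x - y) + (y - x)).
Proof.
  eapply halts_comp2; [apply halts_sub| |apply halts_add].
  eapply halts_comp2; [apply halts_proj|apply halts_proj|apply halts_sub].
Qed.

Definition pow2_code := CPrim (const_code 1) (CComp mul_code [CProj 1; const_code 2]).

Lemma halts_pow2 k args : halts pow2_code (k :: args) (2 ^ k).
Proof.
  induction k as [|k IH]; [apply halts_prim_zero, halts_const|].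
  eapply halts_prim_succ; [exact IH|].
  eapply halts_comp2; [apply halts_proj|apply halts_const|]. cbn.
  replace (2 ^ k + (2 ^ k + 0)) with (2 ^ k * 2) by lia. apply halts_mul.
Qed.

Fixpoint tri (k : nat) : nat := match k with 0 => 0 | S k' => k + tri k' end.

Lemma tri_monotone a b : a <= b -> tri a <= tri b.
Proof. induction 1; cbn; lia. Qed.

Lemma tri_bracket n : exists k, tri k <= n < tri (S k).
Proof.
  induction n as [|n [k Hk]]; [exists 0; cbn; lia|].
  destruct (Nat.eq_dec (S n) (tri (S k))); [exists (S k)|exists k]; cbn in *; lia.
Qed.

Lemma of_nat_tri n k :
  tri k <= n < tri (S k) -> Cantor.of_nat n = (k - (n - tri k), n - tri k).
Proof.
  intros Hk.
  assert (Htri : tri k = nat_rec _ 0 (fun i m => S i + m) k) by (clear Hk; induction k; cbn; auto).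
  assert (Hto : Cantor.to_nat (k - (n - tri k), n - tri k) = n).
  { cbn [Cantor.to_nat]. cbn in Hk.
    replace (n - tri k + (k - (n - tri k))) with k by lia. lia. }
  rewrite <- Hto at 1. apply cancel_of_to.
Qed.

Definition tri_code := CPrim CZero (CComp add_code [CComp CSucc [CProj 0]; CProj 1]).

Lemma halts_tri k args : halts tri_code (k :: args) (tri k).
Proof.
  induction k as [|k IH]; [apply halts_prim_zero, halts_zero|].
  eapply halts_prim_succ; [exact IH|].
  eapply halts_comp2; [eapply halts_comp1; [apply halts_proj|apply halts_succ]|apply halts_proj|].
  apply halts_add.
Qed.

Definition diagonal_test_code :=
  CComp sub_code [CComp CSucc [CProj 1]; CComp tri_code [CComp CSucc [CProj 0]]].

Lemma halts_diagonal_test k n args :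
  halts diagonal_test_code (k :: n :: args) (S n - tri (S k)).
Proof.
  eapply halts_comp2; [| |apply halts_sub].
  - eapply halts_comp1; [apply halts_proj|apply halts_succ].
  - eapply halts_comp1; [eapply halts_comp1; [apply halts_proj|apply halts_succ]|apply halts_tri].
Qed.

Definition diagonal_code := CMu diagonal_test_code.

Lemma halts_diagonal n k args : tri k <= n < tri (S k) -> halts diagonal_code (n :: args) k.
Proof.
  intros Hk. apply halts_mu.
  - replace 0 with (S n - tri (S k)) by lia. apply halts_diagonal_test.
  - intros j Hj. exists (S n - tri (S j)). split; [|apply halts_diagonal_test].
    pose proof (tri_monotone (S j) k Hj). lia.
Qed.

Definition unpair_snd_code := CComp sub_code [CProj 0; CComp tri_code [diagonal_code]].
Definition unpair_fst_code := CComp sub_code [diagonal_code; unpair_snd_code].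

Lemma halts_unpair_snd n args : halts unpair_snd_code (n :: args) (snd (Cantor.of_nat n)).
Proof.
  destruct (tri_bracket n) as [k Hk]. rewrite (of_nat_tri _ _ Hk).
  eapply halts_comp2; [apply halts_proj| |apply halts_sub].
  eapply halts_comp1; [apply halts_diagonal; exact Hk|apply halts_tri].
Qed.

Lemma halts_unpair_fst n args : halts unpair_fst_code (n :: args) (fst (Cantor.of_nat n)).
Proof.
  destruct (tri_bracket n) as [k Hk]. pose proof (halts_unpair_snd n args) as Hsnd.
  rewrite (of_nat_tri _ _ Hk) in *.
  eapply halts_comp2; [apply halts_diagonal; exact Hk|exact Hsnd|apply halts_sub].
Qed.

Lemma enc_inj x y : enc x = enc y -> x = y.
Proof.
  revert y; induction x as [|a x IH]; intros [|b y] H; cbn in H; try lia; [reflexivity|].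
  destruct a, b; try lia; f_equal; apply IH; lia.
Qed.

Lemma enc_surj a : exists x, enc x = a.
Proof.
  induction a as [a IH] using lt_wf_ind. destruct a as [|m]; [now exists nil|].
  pose proof (Nat.div2_odd m) as Hm.
  destruct (IH (Nat.div2 m)) as [x Hx]; [destruct (Nat.odd m); cbn in Hm; lia|].
  exists (Nat.odd m :: x). cbn. rewrite Hx. destruct (Nat.odd m); cbn in Hm; lia.
Qed.

Lemma enc_length p : enc p + 2 <= 2 ^ (length p + 1).
Proof. induction p as [|[|] p IH]; cbn in *; lia. Qed.

Definition ones (n : nat) : bstr := repeat true n ++ [false].

Lemma length_ones n : length (ones n) = S n.
Proof. unfold ones. rewrite length_app, repeat_length. cbn. lia. Qed.

Lemma enc_ones n : enc (ones n) + 2 = 3 * 2 ^ n.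
Proof. unfold ones; induction n; cbn in *; lia. Qed.

Lemma enc_ones_inv p n : enc p + 2 = 3 * 2 ^ n -> p = ones n.
Proof.
  revert n; induction p as [|[|] p IH]; intros n H; cbn in H.
  - destruct n; cbn in H; [lia|]. pose proof (Nat.pow_nonzero 2 n). lia.
  - destruct n; cbn in H; [lia|]. cbn. f_equal. apply IH. lia.
  - destruct n; cbn in H; [destruct p; cbn in H; [reflexivity|lia]|].
    exfalso. assert (Hpar : Nat.even (1 + 2 * (enc p + 1)) = Nat.even (2 * (3 * 2 ^ n)))
      by (f_equal; lia).
    now rewrite Nat.even_add_mul_2, Nat.even_mul in Hpar.
Qed.

Lemma ones_prefix_free a b q : ones a ++ q = ones b -> q = nil.
Proof.
  unfold ones. revert b; induction a as [|a IH]; intros [|b] H; cbn in H; try discriminate.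
  - injection H as H. exact H.
  - injection H as H. apply (IH b). exact H.
Qed.

(* Runs [body], but halts only where the guard [g] halts. *)
Definition guarded (g body : code) : code := CComp (CProj 1) [g; body].

Lemma halts_guarded g body args z x :
  halts g args z -> halts body args x -> halts (guarded g body) args x.
Proof. intros Hg Hb. eapply halts_comp2; [exact Hg|exact Hb|apply halts_proj]. Qed.

Lemma halts_guarded_inv g body args x :
  halts (guarded g body) args x -> (exists z, halts g args z) /\ halts body args x.
Proof.
  intros H. apply halts_comp2_inv in H as [z [b [Hg [Hb Hproj]]]].
  rewrite (halts_deterministic _ _ _ _ Hproj (halts_proj 1 [z; b])). eauto.
Qed.

Lemma guarded_prefix_free g body (P : bstr -> Prop) :
  (forall p y z, halts g [enc p; enc y] z -> P p) ->
  (forall p q, P p -> P (p ++ q) -> q = nil) ->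
  prefix_free_machine (guarded g body).
Proof.
  intros HgP HP y p q [x1 H1] [x2 H2].
  apply halts_guarded_inv in H1 as [[z1 Hg1] _]. apply halts_guarded_inv in H2 as [[z2 Hg2] _].
  exact (HP p q (HgP _ _ _ Hg1) (HgP _ _ _ Hg2)).
Qed.

Definition eq_guard (k : nat) : code := CMu (CComp dist_code [CProj 1; const_code k]).

Lemma halts_eq_guard_test k j v args :
  halts (CComp dist_code [CProj 1; const_code k]) (j :: v :: args) ((v - k) + (k - v)).
Proof. eapply halts_comp2; [apply halts_proj|apply halts_const|apply halts_dist]. Qed.

Lemma halts_eq_guard k args : halts (eq_guard k) (k :: args) 0.
Proof.
  apply halts_mu; [|lia].
  pose proof (halts_eq_guard_test k 0 k args) as H. now rewrite Nat.sub_diag in H.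
Qed.

Lemma halts_eq_guard_inv k v args z : halts (eq_guard k) (v :: args) z -> v = k.
Proof.
  intros H. apply halts_mu_inv in H.
  pose proof (halts_deterministic _ _ _ _ H (halts_eq_guard_test k z v args)). lia.
Qed.

Definition pow_guard_test : code :=
  CComp dist_code [CComp mul_code [const_code 3; CComp pow2_code [CProj 0]];
                   CComp add_code [CProj 1; const_code 2]].

Definition pow_guard : code := CMu pow_guard_test.

Lemma halts_pow_guard_test j v args :
  halts pow_guard_test (j :: v :: args) ((3 * 2 ^ j - (v + 2)) + ((v + 2) - 3 * 2 ^ j)).
Proof.
  eapply halts_comp2; [| |apply halts_dist].
  - eapply halts_comp2; [apply halts_const| |apply halts_mul].
    eapply halts_comp1; [apply halts_proj|apply halts_pow2].
  - eapply halts_comp2; [apply halts_proj|apply halts_const|apply halts_add].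
Qed.

Lemma halts_pow_guard v args n : v + 2 = 3 * 2 ^ n -> halts pow_guard (v :: args) n.
Proof.
  intros Hn. apply halts_mu.
  - pose proof (halts_pow_guard_test n v args) as H. now rewrite Hn, Nat.sub_diag in H.
  - intros j Hj. eexists; split; [|apply halts_pow_guard_test].
    pose proof (Nat.pow_lt_mono_r 2 j n ltac:(lia) Hj). lia.
Qed.

Lemma halts_pow_guard_inv v args z : halts pow_guard (v :: args) z -> v + 2 = 3 * 2 ^ z.
Proof.
  intros H. apply halts_mu_inv in H.
  pose proof (halts_deterministic _ _ _ _ H (halts_pow_guard_test z v args)). lia.
Qed.

Definition program_machine (p : bstr) (body : code) : code := guarded (eq_guard (enc p)) body.

Lemma program_machine_prefix_free p body : prefix_free_machine (program_machine p body).
Proof.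
  apply (guarded_prefix_free _ _ (fun q => q = p)).
  - intros q y z H. exact (enc_inj _ _ (halts_eq_guard_inv _ _ _ _ H)).
  - intros q r -> Hr. destruct r as [|b r]; [reflexivity|].
    apply (f_equal (@length bool)) in Hr. rewrite length_app in Hr. cbn in Hr. lia.
Qed.

Lemma runs_program_machine p body y x :
  halts body [enc p; enc y] (enc x) -> runs (program_machine p body) p y x.
Proof. intros H. eapply halts_guarded; [apply halts_eq_guard|exact H]. Qed.

Lemma Kc_exists u x y : (exists p, runs u p y x) -> exists k, Kc u x y k.
Proof.
  intros [p Hp]. remember (length p) as m eqn:Hm. revert p Hp Hm.
  induction m as [m IH] using lt_wf_ind. intros p Hp Hm.
  destruct (classic (exists p', runs u p' y x /\ length p' < m)) as [[p' [Hp' Hlt]]|Hmin].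
  - exact (IH _ Hlt p' Hp' eq_refl).
  - exists m. split; [eauto|]. intros p' Hp'.
    destruct (le_lt_dec m (length p')); [assumption|]. exfalso. eauto.
Qed.

(* Pigeonhole: fewer than [2 ^ (N + 1) - 1] programs have length at most [N]. *)
Lemma exists_incompressible u N : exists x, forall p, runs u p nil x -> N < length p.
Proof.
  apply NNPP. intros Hnone.
  assert (Hshort : forall i, exists j, exists x p,
            enc x = i /\ enc p = j /\ runs u p nil x /\ length p <= N).
  { intros i. destruct (enc_surj i) as [x Hx].
    destruct (classic (exists p, runs u p nil x /\ length p <= N)) as [[p [Hp Hl]]|Hno];
      [eauto 10|].
    exfalso. apply Hnone. exists x. intros p Hp.
    destruct (le_lt_dec (length p) N); [exfalso; eauto|assumption]. }
  pose (prog := fun i => proj1_sig (constructive_indefinite_description _ (Hshort i))).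
  assert (Hprog : forall i, exists x p,
            enc x = i /\ enc p = prog i /\ runs u p nil x /\ length p <= N)
    by (intros i; exact (proj2_sig (constructive_indefinite_description _ (Hshort i)))).
  assert (Hinj : Injective prog).
  { intros i i' E.
    destruct (Hprog i) as [x [p [Hx [Hp [Hr _]]]]].
    destruct (Hprog i') as [x' [p' [Hx' [Hp' [Hr' _]]]]].
    rewrite <- Hp, <- Hp' in E. apply enc_inj in E. subst p'.
    rewrite <- Hx, <- Hx'. exact (halts_deterministic _ _ _ _ Hr Hr'). }
  set (M := 2 ^ (N + 1)).
  assert (Hincl : incl (map prog (seq 0 M)) (seq 0 (M - 1))).
  { intros j Hj. apply in_map_iff in Hj as [i [<- _]].
    destruct (Hprog i) as [x [p [_ [<- [_ Hl]]]]]. apply in_seq.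
    pose proof (enc_length p).
    pose proof (Nat.pow_le_mono_r 2 (length p + 1) (N + 1) ltac:(lia) ltac:(lia)).
    unfold M. lia. }
  pose proof (NoDup_incl_length (Injective_map_NoDup Hinj (seq_NoDup M 0)) Hincl) as Hlen.
  rewrite length_map, !length_seq in Hlen. unfold M in Hlen.
  pose proof (Nat.pow_nonzero 2 (N + 1)). lia.
Qed.

Open Scope Q_scope.

Definition qn (n : nat) : Q := inject_Z (Z.of_nat n).

Lemma Qdiv_lt_inv_iff (a b v : nat) : (0 < b)%nat -> (0 < v)%nat ->
  qn a / qn b < 1 / qn v <-> (a * v < b)%nat.
Proof.
  intros Hb Hv. destruct b as [|b]; [lia|]. destruct v as [|v]; [lia|].
  unfold qn, Qlt, Qdiv, Qmult, Qinv, inject_Z. cbn.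
  rewrite !Zpos_P_of_succ_nat. nia.
Qed.

Lemma Q_limit_nonincreasing_le (g : nat -> Q) q :
  Q_limit g q -> (forall s, g (S s) <= g s) -> forall s, q <= g s.
Proof.
  intros Hlim Hmono s. apply Qnot_lt_le. intros Hlt.
  assert (Hdecr : forall t, (s <= t)%nat -> g t <= g s).
  { induction 1; [apply Qle_refl|]. eapply Qle_trans; [apply Hmono|assumption]. }
  destruct (Hlim (q - g s)) as [s0 Hs0]; [lra|].
  specialize (Hs0 (max s0 s) ltac:(lia)). specialize (Hdecr (max s0 s) ltac:(lia)).
  apply Qabs_diff_Qlt_condition in Hs0. lra.
Qed.

Lemma Q_limit_eventually_lt (g : nat -> Q) q B : Q_limit g q -> q < B -> exists s, g s < B.
Proof.
  intros Hlim HB. destruct (Hlim (B - q)) as [s0 Hs0]; [lra|].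
  exists s0. specialize (Hs0 s0 (le_n _)). apply Qabs_diff_Qlt_condition in Hs0. lra.
Qed.

Section UniversalMachine.

Variable u : code.
Hypothesis hU : universal_pf u.

Lemma universal_simulation m : prefix_free_machine m ->
  exists sigma, forall p y x, runs m p y x -> runs u (sigma ++ p) y x.
Proof.
  intros Hm. destruct (proj2 hU m Hm) as [sigma Hsigma].
  exists sigma. intros p y x. apply Hsigma.
Qed.

Lemma universal_program p body y x :
  halts body [enc p; enc y] (enc x) -> exists sigma, runs u (sigma ++ p) y x.
Proof.
  intros H. destruct (universal_simulation _ (program_machine_prefix_free p body)) as [sg Hsg].
  exists sg. apply Hsg, runs_program_machine, H.
Qed.

Lemma copy_program : exists c, forall x, runs u c x x.
Proof.
  destruct (universal_simulation _ (program_machine_prefix_free nil (CProj 1))) as [c Hc].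
  exists (c ++ nil). intros x. apply Hc, runs_program_machine, (halts_proj 1 [0%nat; enc x]).
Qed.

Lemma runs_nonempty p y x : runs u p y x -> p <> nil.
Proof.
  intros Hp ->.
  destruct (universal_program [true] (CProj 1) y y (halts_proj 1 _)) as [sg Hsg].
  assert (Hnil : sg ++ [true] = nil) by (apply (proj1 hU y nil); eexists; eassumption).
  now destruct sg.
Qed.

Lemma Kc_pos x y k : Kc u x y k -> (1 <= k)%nat.
Proof.
  intros [[p [Hp <-]] _]. destruct p; [exfalso; exact (runs_nonempty _ _ _ Hp eq_refl)|].
  cbn. lia.
Qed.

Lemma NID_diag_exists x : exists q, NID_is u x x q.
Proof.
  destruct copy_program as [c Hc].
  destruct (universal_program nil (const_code (enc x)) nil x (halts_const _ _)) as [sg Hsg].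
  destruct (Kc_exists u x x (ex_intro _ c (Hc x))) as [kxx Hkxx].
  destruct (Kc_exists u x nil (ex_intro (fun p => runs u p nil x) _ Hsg)) as [kx Hkx].
  exists (qn (max kxx kxx) / qn (max kx kx)), kxx, kxx, kx, kx.
  repeat split; try apply Hkxx; try apply Hkx; reflexivity.
Qed.

Lemma NID_diag_lower x p q : runs u p nil x -> NID_is u x x q -> 1 / qn (length p) <= q.
Proof.
  intros Hp [kxy [kyx [kx [ky [Hxy [_ [Hx [Hy Hq]]]]]]]].
  pose proof (Kc_pos _ _ _ Hxy). pose proof (Kc_pos _ _ _ Hx).
  pose proof (proj2 Hx p Hp). pose proof (proj2 Hy p Hp).
  rewrite Hq. fold (qn (max kxy kyx)) (qn (max kx ky)).
  apply Qnot_lt_le. rewrite Qdiv_lt_inv_iff; nia.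
Qed.

Lemma NID_diag_small m : (0 < m)%nat -> exists x q, NID_is u x x q /\ q < 1 / qn m.
Proof.
  intros Hm. destruct copy_program as [c Hc].
  destruct (exists_incompressible u (length c * m)) as [x Hx].
  destruct (NID_diag_exists x) as [q Hq]. exists x, q. split; [exact Hq|].
  destruct Hq as [kxy [kyx [kx [ky [Hxy [Hyx [[[px [Hpx <-]] _] [[[py [Hpy <-]] _] Hq]]]]]]]].
  pose proof (proj2 Hxy c (Hc x)). pose proof (proj2 Hyx c (Hc x)).
  pose proof (Hx px Hpx). pose proof (Hx py Hpy).
  rewrite Hq. fold (qn (max kxy kyx)) (qn (max (length px) (length py))). apply Qdiv_lt_inv_iff; nia.
Qed.

End UniversalMachine.

Open Scope nat_scope.

(* [gap v r = 0] decides [decodeQ r < 1 / v] with natural-number arithmetic only. *)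
Definition gap (v r : nat) : nat :=
  let (A, t) := Cantor.of_nat r in let (B, C) := Cantor.of_nat t in v * A - (v * B + C).

Lemma gap_zero_iff v r : 0 < v -> gap v r = 0 <-> (decodeQ r < 1 / qn v)%Q.
Proof.
  intros Hv. unfold gap, decodeQ.
  destruct (Cantor.of_nat r) as [A t]. destruct (Cantor.of_nat t) as [B C].
  destruct v as [|v]; [lia|].
  unfold qn, Qlt, Qdiv, Qmult, Qinv, Qminus, Qplus, Qopp, inject_Z. cbn.
  rewrite !Zpos_P_of_succ_nat. nia.
Qed.

Definition diag_query_code (e : code) : code :=
  CComp e [CComp unpair_fst_code [CProj 0]; CComp unpair_fst_code [CProj 0];
           CComp unpair_snd_code [CProj 0]].

Definition gap_code (e : code) : code :=
  CComp sub_code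
    [CComp mul_code [CProj 1; CComp unpair_fst_code [diag_query_code e]];
     CComp add_code
       [CComp mul_code [CProj 1; CComp unpair_fst_code [CComp unpair_snd_code [diag_query_code e]]];
        CComp unpair_snd_code [CComp unpair_snd_code [diag_query_code e]]]].

Lemma halts_gap_code e a s v args r :
  halts e [a; a; s] r -> halts (gap_code e) (Cantor.to_nat (a, s) :: v :: args) (gap v r).
Proof.
  intros He.
  assert (Hq : halts (diag_query_code e) (Cantor.to_nat (a, s) :: v :: args) r).
  { assert (Hfst : forall l, halts unpair_fst_code (Cantor.to_nat (a, s) :: l) a).
    { intros l. pose proof (halts_unpair_fst (Cantor.to_nat (a, s)) l) as H.
      now rewrite cancel_of_to in H. }
    assert (Hsnd : forall l, halts unpair_snd_code (Cantor.to_nat (a, s) :: l) s).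
    { intros l. pose proof (halts_unpair_snd (Cantor.to_nat (a, s)) l) as H.
      now rewrite cancel_of_to in H. }
    eapply halts_comp3; [| | |exact He];
      (eapply halts_comp1; [apply halts_proj|]); cbn [nth]; auto. }
  replace (gap v r) with (v * fst (Cantor.of_nat r) -
    (v * fst (Cantor.of_nat (snd (Cantor.of_nat r))) + snd (Cantor.of_nat (snd (Cantor.of_nat r)))))
    by (unfold gap; destruct (Cantor.of_nat r) as [A t]; cbn [fst snd];
        destruct (Cantor.of_nat t); reflexivity).
  eapply halts_comp2; [| |apply halts_sub].
  - eapply halts_comp2; [apply halts_proj| |apply halts_mul].
    eapply halts_comp1; [exact Hq|apply halts_unpair_fst].
  - eapply halts_comp2; [| |apply halts_add].
    + eapply halts_comp2; [apply halts_proj| |apply halts_mul].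
      eapply halts_comp1; [eapply halts_comp1; [exact Hq|apply halts_unpair_snd]|apply halts_unpair_fst].
    + eapply halts_comp1; [eapply halts_comp1; [exact Hq|apply halts_unpair_snd]|apply halts_unpair_snd].
Qed.

(* On the program [ones n], of code [v], search for the first Cantor-coded pair [(x, s)]
   whose value under [e] on [(x, x, s)] is below [1 / v], and print [x]. *)
Definition search_machine (e : code) : code :=
  guarded pow_guard (CComp unpair_fst_code [CMu (gap_code e)]).

Lemma search_machine_prefix_free e : prefix_free_machine (search_machine e).
Proof.
  apply (guarded_prefix_free _ _ (fun p => exists n, p = ones n)).
  - intros p y z H. exists z. exact (enc_ones_inv _ _ (halts_pow_guard_inv _ _ _ H)).
  - intros p q [a ->] [b Hb]. exact (ones_prefix_free _ _ _ Hb).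
Qed.

Lemma to_nat_enc_surj w : exists x s, w = Cantor.to_nat (enc x, s).
Proof.
  destruct (enc_surj (fst (Cantor.of_nat w))) as [x Hx]. exists x, (snd (Cantor.of_nat w)).
  rewrite Hx, <- surjective_pairing. symmetry. apply cancel_to_of.
Qed.

Section SearchMachine.

Variable f : bstr -> bstr -> nat -> Q.
Variable e : code.
Hypothesis He : forall x y s, exists r, halts e [enc x; enc y; s] r /\ (decodeQ r == f x y s)%Q.

Lemma halts_gap x s v args :
  exists r, halts (gap_code e) (Cantor.to_nat (enc x, s) :: v :: args) (gap v r) /\
            (decodeQ r == f x x s)%Q.
Proof.
  destruct (He x x s) as [r [Hr Hdec]].
  exists r. split; [apply halts_gap_code, Hr|exact Hdec].
Qed.

Lemma search_machine_total n y :
  (exists x s, (f x x s < 1 / qn (enc (ones n)))%Q) -> exists x, runs (search_machine e) (ones n) y x.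
Proof.
  intros [x0 [s0 Hs0]]. set (v := enc (ones n)).
  assert (Hv : 0 < v) by (pose proof (enc_ones n); pose proof (Nat.pow_nonzero 2 n); lia).
  assert (Htot : forall w, exists z, halts (gap_code e) (w :: v :: [enc y]) z).
  { intros w. destruct (to_nat_enc_surj w) as [x [s ->]].
    destruct (halts_gap x s v [enc y]) as [r [Hr _]]. eauto. }
  assert (Hzero : halts (gap_code e) (Cantor.to_nat (enc x0, s0) :: v :: [enc y]) 0).
  { destruct (halts_gap x0 s0 v [enc y]) as [r [Hr Hdec]].
    replace 0 with (gap v r); [exact Hr|]. apply gap_zero_iff; [exact Hv|]. now rewrite Hdec. }
  destruct (halts_mu_total _ _ _ Htot Hzero) as [w Hw].
  destruct (enc_surj (fst (Cantor.of_nat w))) as [x Hx]. exists x.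
  eapply halts_guarded; [apply halts_pow_guard, enc_ones|].
  eapply halts_comp1; [exact Hw|]. rewrite Hx. apply halts_unpair_fst.
Qed.

Lemma search_machine_sound p y x :
  runs (search_machine e) p y x -> exists s, (f x x s < 1 / qn (enc p))%Q.
Proof.
  intros H. apply halts_guarded_inv in H as [[z Hz] Hbody].
  apply halts_pow_guard_inv in Hz.
  assert (Hv : 0 < enc p) by (pose proof (Nat.pow_nonzero 2 z); lia).
  apply halts_comp1_inv in Hbody as [w [Hw Hfst]].
  apply halts_mu_inv in Hw.
  assert (Hwx : w = Cantor.to_nat (enc x, snd (Cantor.of_nat w))).
  { rewrite (halts_deterministic _ _ _ _ Hfst (halts_unpair_fst w [])), <- surjective_pairing.
    symmetry. apply cancel_to_of. }
  rewrite Hwx in Hw. destruct (halts_gap x (snd (Cantor.of_nat w)) (enc p) [enc y]) as [r [Hr Hdec]].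
  exists (snd (Cantor.of_nat w)). rewrite <- Hdec. apply gap_zero_iff; [exact Hv|].
  exact (halts_deterministic _ _ _ _ Hr Hw).
Qed.

End SearchMachine.

Open Scope Q_scope.

Theorem mainTheorem4 (u : code) (hU : universal_pf u) :
  ~ exists f : bstr -> bstr -> nat -> Q,
      computable3 f /\
      (forall x y s, f x y (S s) <= f x y s) /\
      (forall x y q, NID_is u x y q -> Q_limit (f x y) q).
Proof.
  intros [f [[e He] [Hmono Hlim]]].
  destruct (universal_simulation u hU _ (search_machine_prefix_free e)) as [sg Hsg].
  set (n := (length sg + 2)%nat). set (v := enc (ones n)).
  assert (Hv : (0 < length (sg ++ ones n) <= v)%nat).
  { rewrite length_app, length_ones. pose proof (enc_ones n).
    pose proof (Nat.pow_gt_lin_r 2 n ltac:(lia)). unfold v, n in *. lia. }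
  destruct (NID_diag_small u hU v) as [x0 [q0 [Hq0 Hsmall]]]; [lia|].
  destruct (Q_limit_eventually_lt _ _ _ (Hlim _ _ _ Hq0) Hsmall) as [s0 Hs0].
  destruct (search_machine_total f e He n nil) as [x Hx]; [eauto|].
  destruct (search_machine_sound f e He _ _ _ Hx) as [s Hs].
  destruct (NID_diag_exists u hU x) as [q Hq].
  pose proof (NID_diag_lower u hU _ _ _ (Hsg _ _ _ Hx) Hq) as Hlower.
  pose proof (Q_limit_nonincreasing_le _ _ (Hlim _ _ _ Hq) (Hmono x x) s) as Hupper.
  assert (Hinv : 1 / qn (length (sg ++ ones n)) < 1 / qn v)
    by (eapply Qle_lt_trans; [exact Hlower|]; eapply Qle_lt_trans; [exact Hupper|exact Hs]).
  apply (Qdiv_lt_inv_iff 1) in Hinv; lia.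
Qed.
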